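(* For every integer $n>2$ there exist two pedigrees $\mathcal{T}(X_0)$ and $\mathcal{U}(X_0)$ on the same extant set $X_0$ with $|X_0|=n$ such that (i) for every $Y\subset X_0$ with $|Y|=n-1$ there is an isomorphism from the sub-pedigree $\mathcal{T}(Y)$ to the sub-pedigree $\mathcal{U}(Y)$ fixing every vertex of $Y$; but (ii) there is no isomorphism from $\mathcal{T}(X_0)$ to $\mathcal{U}(X_0)$ fixing every vertex of $X_0$. In particular, for every $n>3$ there are pedigrees of order $n$ that are not $(n-1)$-reconstructible.
   Context: A (general) pedigree $\mathcal{T}(X_0)$ on a set $X_0$ is a finite directed graph on a vertex set $V$ such that: every vertex has out-degree $0$ or $2$; $X_0\subseteq V$ and every vertex of $X_0$ has in-degree $0$; there are no isolated vertices. Vertices of $X_0$ are called extant; $|X_0|$ is the order of the pedigree. If $uv$ is an arc, $v$ is a parent of $u$. A vertex $v$ is an ancestor of $u$ (and $u$ a descendant of $v$) if there is a directed path from $u$ to $v$ (every vertex is its own ancestor and descendant). For $Y\subseteq X_0$, the sub-pedigree $\mathcal{T}(Y)$ is obtained from $\mathcal{T}(X_0)$ by deleting every vertex that has no descendant in $Y$; its extant set is $Y$. An isomorphism of pedigrees is a bijection of vertex sets preserving arcs in both directions. For $n>r>2$, two pedigrees of order $n$ on the same extant set $X_0$ are $r$-hypomorphic if for every $Y\subset X_0$ with $|Y|=r$ there is an isomorphism $\mathcal{T}(Y)\to\mathcal{U}(Y)$ fixing each vertex of $Y$; $\mathcal{T}(X_0)$ is $r$-reconstructible if every pedigree $\mathcal{U}(X_0)$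 that is $r$-hypomorphic to it is isomorphic to it via an isomorphism fixing each vertex of $X_0$. *)

From mathcomp Require Import all_boot.
Set Implicit Arguments. Unset Strict Implicit. Unset Printing Implicit Defensive.

(* A (general) pedigree on the extant label set X0: a finite simple digraph
   (no loops, no multiple arcs) on the vertex type [pV], arcs [parc u v]
   meaning "v is a parent of u", together with an injective embedding of
   the extant set X0 into the vertices. *)
Record pedigree (X0 : finType) := Pedigree {
  pV : finType;
  parc : rel pV;
  pext : X0 -> pV;
  pext_inj : injective pext;
  parc_irr : irreflexive parc;
  pout_deg : forall u : pV, #|[set v | parc u v]| \in [:: 0; 2];
  pext_in0 : forall (x : X0) (u : pV), ~~ parc u (pext x);
  pno_isol : forall v : pV, exists u : pV, parc v u || parc u v
}.

Definition descendant (X0 : finType) (P : pedigree X0) (u v : pV P) : bool :=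
  connect (@parc X0 P) u v.

Definition subped_vertices (X0 : finType) (P : pedigree X0) (Y : {set X0})
  : {set pV P} :=
  [set v | [exists y in Y, descendant (pext P y) v]].

Definition sub_iso (X0 : finType) (T U : pedigree X0) (Y : {set X0}) : Prop :=
  exists f : pV T -> pV U,
    [/\ {in subped_vertices T Y &, injective f},
        f @: subped_vertices T Y = subped_vertices U Y,
        {in subped_vertices T Y &, forall u v, parc u v = parc (f u) (f v)}
      & {in Y, forall y, f (pext T y) = pext U y}].

Definition r_hypomorphic (X0 : finType) (r : nat) (T U : pedigree X0) : Prop :=
  forall Y : {set X0}, #|Y| = r -> sub_iso T U Y.

Definition r_reconstructible (X0 : finType) (r : nat) (T : pedigree X0) : Prop :=
  forall U : pedigree X0, r_hypomorphic r T U -> sub_iso T U setT.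

From mathcomp Require Import all_boot zify.
Set Implicit Arguments. Unset Strict Implicit. Unset Printing Implicit Defensive.

(** The pedigrees are twisted ladders over the cycle Z_n: extant x_i has the
    two parents p_(i,0), p_(i,1), and p_(i,s) has the two founders g_(i,s)
    and g_(i+1, s + t_i) as parents, for a twist t : Z_n -> Z_2. Swapping the
    labels of p_(i,_) and g_(i,_) according to S : Z_n -> Z_2 turns t_i into
    t_i + S_i + S_(i+1). An isomorphism fixing the extant vertices is such a
    relabelling, so the total twist sum_i t_i is an invariant; but once an
    extant x_j is deleted the cycle is cut at j, and S_i := [j < i] moves the
    whole twist onto the missing rung. Hence the untwisted ladder and the
    ladder with one twist are (n-1)-hypomorphic but not isomorphic. *)

Lemma ordS_val n (i : 'I_n.+1) :
  val (ordS i) = if i == ord_max then 0 else i.+1.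
Proof.
rewrite /=; case: eqP => [->|ne]; first by rewrite /= modnn.
have /negbTE i_neq_n : val i != n by apply/eqP => e; apply/ne/val_inj.
by rewrite modn_small // ltnS ltn_neqAle i_neq_n -ltnS ltn_ord.
Qed.

Lemma ordS_neq n (i : 'I_n.+2) : ordS i != i.
Proof.
by apply/eqP => /(congr1 val); rewrite ordS_val; case: eqP => [->|_] /=; lia.
Qed.

Lemma ordS2_neq n (i : 'I_n.+3) : ordS (ordS i) != i.
Proof.
apply/eqP => /(congr1 val); rewrite !ordS_val.
case: (i =P ord_max) => [->|/eqP/negbTE i_max]; first by case: eqP.
case: eqP => [/(congr1 val)|_]; last by move=> /=; lia.
by rewrite ordS_val i_max /=; lia.
Qed.

Lemma ltn_ordS n (j i : 'I_n.+1) :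
  i != j -> (j < ordS i) = (j < i) (+) (i == ord_max).
Proof.
rewrite ordS_val; case: (i =P ord_max) => [->|_] ij /=.
  by move: ij (ltn_ord j); rewrite -val_eqE /= => /negbTE; lia.
by rewrite ltnS leq_eqVlt val_eqE eq_sym (negbTE ij) addbF.
Qed.

Lemma setC1_of_card (T : finType) (Y : {set T}) :
  #|Y|.+1 = #|T| -> exists j, Y = ~: [set j].
Proof.
move=> cardY; have /cards1P [j Yj] : #|~: Y| == 1.
  by rewrite cardsCs setCK -cardY subSnn.
by exists j; rewrite -Yj setCK.
Qed.

Section TwistedLadder.

Variable n : nat.
Local Notation N := n.+3.

Definition ladder_vertex := (('I_N + ('I_N * bool)) + ('I_N * bool))%type.

Definition extant i : ladder_vertex := inl (inl i).
Definition parent i s : ladder_vertex := inl (inr (i, s)).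
Definition founder i s : ladder_vertex := inr (i, s).

Definition ladder_arc (t : 'I_N -> bool) : rel ladder_vertex := fun u v =>
  match u, v with
  | inl (inl x), inl (inr (i, _)) => i == x
  | inl (inr (i, s)), inr (k, s') =>
      ((k == i) && (s' == s)) || ((k == ordS i) && (s' == s (+) t i))
  | _, _ => false
  end.

Variable t : 'I_N -> bool.

Lemma extant_inj : injective extant.
Proof. by move=> x y [->]. Qed.

Lemma ladder_arc_irr : irreflexive (ladder_arc t).
Proof. by case=> [[?|[? ?]]|[? ?]]. Qed.

Lemma ladder_arc_extant x u : ~~ ladder_arc t u (extant x).
Proof. by case: u => [[?|[? ?]]|[? ?]]. Qed.

Lemma parent_eq i s j s' : (parent i s == parent j s') = (i == j) && (s == s').
Proof. exact: xpair_eqE. Qed.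

Lemma founder_eq i s j s' : (founder i s == founder j s') = (i == j) && (s == s').
Proof. exact: xpair_eqE. Qed.

Lemma ladder_arc_parentE i s v :
  ladder_arc t (parent i s) v
  = (v == founder i s) || (v == founder (ordS i) (s (+) t i)).
Proof. by case: v => [[?|[? ?]]|[? ?]] //=; rewrite !founder_eq. Qed.

Lemma ladder_out_deg u : #|[set v | ladder_arc t u v]| \in [:: 0; 2].
Proof.
case: u => [[i|[i s]]|[i s]].
- have -> : [set v | ladder_arc t (extant i) v]
            = [set parent i false; parent i true].
    apply/setP => -[[x|[x b]]|[x b]]; rewrite !inE //= ?parent_eq.
    by case: b; rewrite /= ?andbT ?andbF ?orbF.
  by rewrite cards2 parent_eq eqxx.
- have -> : [set v | ladder_arc t (parent i s) v]
            = [set founder i s; founder (ordS i) (s (+) t i)].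
    by apply/setP => v; rewrite !inE ladder_arc_parentE.
  by rewrite cards2 founder_eq eq_sym (negbTE (ordS_neq i)).
- have -> : [set v | ladder_arc t (founder i s) v] = set0.
    by apply/setP => -[[x|[x b]]|[x b]]; rewrite !inE.
  by rewrite cards0.
Qed.

Lemma ladder_no_isolated v : exists u, ladder_arc t v u || ladder_arc t u v.
Proof.
case: v => [[i|[i s]]|[i s]].
- by exists (parent i false); rewrite /= eqxx.
- by exists (founder i s); rewrite /= !eqxx.
- by exists (parent i s); rewrite /= !eqxx.
Qed.

Definition ladder : pedigree 'I_N :=
  Pedigree extant_inj ladder_arc_irr ladder_out_deg ladder_arc_extant
    ladder_no_isolated.

End TwistedLadder.

Section LadderIsomorphisms.

Variable n : nat.
Local Notation N := n.+3.
Implicit Types (t S : 'I_N -> bool) (Y : {set 'I_N}).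

Definition ladder_anc (y : 'I_N) (v : ladder_vertex n) : bool :=
  match v with
  | inl (inl x) => x == y
  | inl (inr (i, _)) => i == y
  | inr (k, _) => (k == y) || (k == ordS y)
  end.

Lemma ladder_anc_arc t y u v :
  ladder_anc y u -> ladder_arc t u v -> ladder_anc y v.
Proof.
case: u => [[x|[x b]]|[x b]]; case: v => [[x'|[x' b']]|[x' b']] //=.
- by move/eqP->.
- by move/eqP->; case/orP => /andP[/eqP-> _]; rewrite eqxx ?orbT.
Qed.

Lemma connect_ladder_arc t y v :
  connect (ladder_arc t) (extant y) v = ladder_anc y v.
Proof.
apply/idP/idP.
- case/connectP => p + ->; have : ladder_anc y (extant y) by rewrite /= eqxx.
  elim: p (extant y) => [|z p IHp] x x_anc //= /andP[xz zp].
  exact: IHp (ladder_anc_arc x_anc xz) zp.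
- case: v => [[x|[x s]]|[x s]] /=.
  + by move/eqP->.
  + by move/eqP->; apply: connect1; rewrite /= eqxx.
  + case/orP => /eqP->.
      apply: (connect_trans (y := parent y s)); apply: connect1.
        by rewrite /= eqxx.
      by rewrite /= !eqxx.
    apply: (connect_trans (y := parent y (s (+) t y))); apply: connect1.
      by rewrite /= eqxx.
    by rewrite /= -addbA addbb addbF !eqxx orbT.
Qed.

Lemma ladder_subpedE t Y :
  subped_vertices (ladder t) Y = [set v | [exists y in Y, ladder_anc y v]].
Proof.
apply/setP => v; rewrite !inE; apply: eq_existsb => y.
by rewrite /descendant /= connect_ladder_arc.
Qed.

Definition flip_sides S (v : ladder_vertex n) : ladder_vertex n :=
  match v with
  | inl (inl x) => extant x
  | inl (inr (i, s)) => parent i (s (+) S i)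
  | inr (k, s) => founder k (s (+) S k)
  end.

Lemma flip_sidesK S : involutive (flip_sides S).
Proof. by case=> [[x|[x s]]|[x s]] //=; rewrite -addbA addbb addbF. Qed.

Lemma ladder_anc_flip S y v : ladder_anc y (flip_sides S v) = ladder_anc y v.
Proof. by case: v => [[x|[x s]]|[x s]]. Qed.

Definition regauge t S i := t i (+) S i (+) S (ordS i).

Lemma ladder_arc_flip t S u v :
  ladder_arc (regauge t S) (flip_sides S u) (flip_sides S v) = ladder_arc t u v.
Proof.
case: u => [[x|[i s]]|[x s]]; case: v => [[y|[y s']]|[k s']] //=.
rewrite /regauge; have [->|_] := eqVneq k i.
  rewrite [i == ordS i]eq_sym (negbTE (ordS_neq i)) /= !orbF.
  by case: s s' (S i) => [] [] [].
case: (k =P ordS i) => [->|_] //=.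
by case: s s' (S i) (S (ordS i)) (t i) => [] [] [] [] [].
Qed.

Lemma ladder_arc_local t t' y u v :
  ladder_anc y u -> t y = t' y -> ladder_arc t u v = ladder_arc t' u v.
Proof. by case: u => [[x|[i s]]|[x s]] //= /eqP-> ty; rewrite ty. Qed.

Lemma sub_iso_flip t t' S Y :
  {in Y, forall i, t' i = regauge t S i} -> sub_iso (ladder t) (ladder t') Y.
Proof.
move=> t'_gauge; exists (flip_sides S); split.
- by move=> u v _ _; apply: (can_inj (flip_sidesK S)).
- rewrite !ladder_subpedE (can_imset_pre _ (flip_sidesK S)).
  by apply/setP => v; rewrite !inE; under eq_existsb do rewrite ladder_anc_flip.
- move=> u v; rewrite ladder_subpedE inE => /existsP[y /andP[yY y_anc]] _ /=.
  rewrite -(ladder_arc_flip t S).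
  apply: (ladder_arc_local (y := y)); first by rewrite ladder_anc_flip.
  by rewrite t'_gauge.
- by [].
Qed.

Definition twist_parity t := \big[addb/false]_(i < N) t i.

Section Rigidity.

Variables (t t' : 'I_N -> bool) (f : ladder_vertex n -> ladder_vertex n).
Hypothesis f_inj : injective f.
Hypothesis f_arc : forall u v, ladder_arc t u v = ladder_arc t' (f u) (f v).
Hypothesis f_extant : forall y, f (extant y) = extant y.

Lemma iso_parent_rung i s : exists b, f (parent i s) = parent i b.
Proof.
have := f_arc (extant i) (parent i s); rewrite /= eqxx f_extant.
by case: (f (parent i s)) => [[x|[x b]]|[x b]] //= /esym/eqP->; exists b.
Qed.

Definition parent_side (v : ladder_vertex n) : bool :=
  if v is inl (inr (_, s)) then s else false.

Let h i := parent_side (f (parent i false)).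

Lemma iso_parent i s : f (parent i s) = parent i (s (+) h i).
Proof.
have [b0 f0] := iso_parent_rung i false; have [b1 f1] := iso_parent_rung i true.
rewrite /h f0; case: s => //=; rewrite f1.
have : f (parent i true) != f (parent i false).
  by rewrite (inj_eq f_inj) parent_eq eqxx.
by rewrite f0 f1 parent_eq eqxx; case: b0 b1 {f0 f1} => [] [].
Qed.

(* The founder g_(i+1,0) is a common parent of p_(i+1,0) and p_(i,t_i), and
   the only founder adjacent to both rung i and rung i+1 of the image. *)
Lemma iso_side_step i : h (ordS i) = h i (+) t i (+) t' i.
Proof.
set g := founder (ordS i) false.
have e1 : ladder_arc t' (parent (ordS i) (h (ordS i))) (f g).
  rewrite -[parent _ (h _)]/(parent (ordS i) (false (+) h (ordS i))).
  by rewrite -iso_parent -f_arc /= !eqxx.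
have e2 : ladder_arc t' (parent i (t i (+) h i)) (f g).
  by rewrite -iso_parent -f_arc /= addbb !eqxx orbT.
move: e1 e2; rewrite !ladder_arc_parentE.
case/orP=> /eqP->; rewrite !founder_eq.
  by rewrite (negbTE (ordS_neq i)) eqxx /= => /eqP->; rewrite (addbC (t i)).
by rewrite (negbTE (ordS2_neq i)) (negbTE (ordS_neq (ordS i))).
Qed.

Lemma iso_twist_parity : twist_parity t = twist_parity t'.
Proof.
have sides i : t i (+) t' i = h (ordS i) (+) h i.
  by rewrite iso_side_step; case: (h i) (t i) (t' i) => [] [] [].
have : \big[addb/false]_(i < N) (t i (+) t' i) = false.
  under eq_bigr do rewrite sides.
  rewrite big_split /= -(reindex_inj (P := xpredT) (F := h) (@ordS_inj N)).
  exact: addbb.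
rewrite big_split /= -/(twist_parity t) -/(twist_parity t').
by case: (twist_parity t) (twist_parity t') => [] [].
Qed.

End Rigidity.

Lemma sub_iso_twist_parity t t' :
  sub_iso (ladder t) (ladder t') setT -> twist_parity t = twist_parity t'.
Proof.
case=> f [f_inj _ f_arc f_extant].
have subT v : v \in subped_vertices (ladder t) setT.
  rewrite ladder_subpedE inE; apply/existsP.
  by case: v => [[x|[x s]]|[x s]]; exists x; rewrite in_setT /= eqxx.
apply: (@iso_twist_parity t t' f).
- by move=> u v; apply: f_inj; apply: subT.
- by move=> u v; apply: f_arc; apply: subT.
- by move=> y; apply: f_extant; rewrite inE.
Qed.

Definition untwisted : 'I_N -> bool := fun=> false.
Definition one_twist : 'I_N -> bool := fun i => i == ord_max.

Lemma twist_parity_untwisted : twist_parity untwisted = false.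
Proof. exact: big1. Qed.

Lemma twist_parity_one_twist : twist_parity one_twist = true.
Proof.
rewrite /twist_parity (bigD1 ord_max) //= big1 => [|i /negbTE].
  by rewrite /one_twist eqxx.
by rewrite /one_twist.
Qed.

Lemma untwisted_one_twist_hypomorphic Y :
  #|Y| = n.+2 -> sub_iso (ladder untwisted) (ladder one_twist) Y.
Proof.
move=> cardY; have [j ->] : exists j, Y = ~: [set j].
  by apply: setC1_of_card; rewrite cardY card_ord.
apply: (sub_iso_flip (S := fun k => j < k)) => i; rewrite !inE => ij.
by rewrite /regauge ltn_ordS //= addbA addbb.
Qed.

End LadderIsomorphisms.

Lemma hypomorphic_nonisomorphic_pedigrees n : 2 < n ->
  exists (X0 : finType) (T U : pedigree X0),
    [/\ #|X0| = n,
        (forall Y : {set X0}, #|Y| = n.-1 -> sub_iso T U Y)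
      & ~ sub_iso T U setT].
Proof.
case: n => [|[|[|n]]] // _.
exists 'I_n.+3, (ladder (@untwisted n)), (ladder (@one_twist n)); split.
- by rewrite card_ord.
- exact: untwisted_one_twist_hypomorphic.
- move/sub_iso_twist_parity.
  by rewrite twist_parity_untwisted twist_parity_one_twist.
Qed.

Theorem mainTheorem1 :
  (forall n : nat, 2 < n ->
     exists (X0 : finType) (T U : pedigree X0),
       [/\ #|X0| = n,
           (forall Y : {set X0}, #|Y| = n.-1 -> sub_iso T U Y)
         & ~ sub_iso T U setT])
  /\
  (forall n : nat, 3 < n ->
     exists (X0 : finType) (T : pedigree X0),
       #|X0| = n /\ ~ r_reconstructible n.-1 T).
Proof.
split=> [|n n_gt3]; first exact: hypomorphic_nonisomorphic_pedigrees.
have [X0 [T [U [cardX0 hypo noniso]]]] :=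
  hypomorphic_nonisomorphic_pedigrees (ltnW n_gt3).
by exists X0, T; split=> // /(_ U hypo).
Qed.
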